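(* For every $\varepsilon>0$ there exists $C_\varepsilon\in\mathbb R$, depending only on $\varepsilon$, $\eta$ and $\Gamma$, such that $$\eta(u)\le\varepsilon\,\Gamma(u)+C_\varepsilon\qquad\text{for all }u\in\bar I_p.$$
   Context: $\eta:\mathbb R_+\to\mathbb R_+$ is continuous, $\eta(0)=0$, $\eta(u)>0$ for $u\ne0$, nondecreasing on $\mathbb R_+$, and extended to $\mathbb R$ as an even function. $p\in L^1_{loc}(\mathbb R_+)$ is absolutely continuous and increasing on $(0,\infty)$, $p(u)\to+\infty$ as $u\to+\infty$; if $p(0):=\lim_{u\downarrow0}p(u)$ is finite, $p(u)=2p(0)-p(-u)$ for $u\le0$. $I_p=(0,\infty)$ if $p(0)=-\infty$, $I_p=\mathbb R$ otherwise, with closure $\bar I_p$. $\Gamma(u)=\int_1^u(p(a)-p(1))da$ on $\bar I_p$. Assumption: $\Gamma(u)/\eta(u)\to+\infty$ as $u\to+\infty$. *)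

From HB Require Import structures.
From mathcomp Require Import all_boot all_order all_algebra.
From mathcomp Require Import all_classical all_reals all_analysis.
Set Implicit Arguments. Unset Strict Implicit. Unset Printing Implicit Defensive.
Import Order.TTheory GRing.Theory Num.Theory.
Import numFieldNormedType.Exports.
Local Open Scope classical_set_scope.
Local Open Scope ring_scope.

Definition abs_cont_on {R : realType} (f : R -> R) (a b : R) : Prop :=
  forall e : R, 0 < e -> exists2 d : R, 0 < d &
    forall (n : nat) (x y : nat -> R),
      (forall i, (i < n)%N -> [/\ a <= x i, x i <= y i & y i <= b]) ->
      (forall i, (i.+1 < n)%N -> y i <= x i.+1) ->
      \sum_(i < n) (y i - x i) < d ->
      \sum_(i < n) `|f (y i) - f (x i)| < e.

Definition abs_cont_pos {R : realType} (f : R -> R) : Prop :=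
  forall a b : R, 0 < a -> a <= b -> abs_cont_on f a b.

(* Gamma(u) = int_1^u (p a - p 1) da  (oriented Lebesgue integral) *)
Definition Gamma {R : realType} (p : R -> R) (u : R) : R :=
  if 1 <= u then Rintegral lebesgue_measure `[1, u] (fun a => p a - p 1)
  else - Rintegral lebesgue_measure `[u, 1] (fun a => p a - p 1).

(* closure of I_p, where p0 = lim_{u -> 0+} p u in \bar R:
   [0, +oo) if p0 = -oo, R otherwise *)
Definition Ip_closure {R : realType} (p0 : \bar R) (u : R) : Prop :=
  if p0 is -oo%E then 0 <= u else True.

(* Since Gamma / eta -> +oo, eta u <= eps * Gamma u beyond some M >= 1; on [-M, M]
   eta is bounded by eta M and Gamma >= 0 on the closure of I_p, because p lies
   below p 1 to the left of 1 and above it to the right.  Below -M (possible only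
   when p(0) is finite) the reflection p u = 2 p(0) - p (-u), with p(0) <= p 1,
   gives Gamma (-v) >= Gamma v for v >= 1, and eta is even. *)
From HB Require Import structures.
From mathcomp Require Import all_boot all_order all_algebra.
From mathcomp Require Import all_classical all_reals all_analysis.
From mathcomp Require Import lra measurable_realfun.
Import Order.TTheory GRing.Theory Num.Theory.
Import numFieldNormedType.Exports.
Local Open Scope classical_set_scope.
Local Open Scope ring_scope.

Section lebesgue_interval.
Context {R : realType}.
Local Notation mu := (@lebesgue_measure R).

Lemma oppr_Rintegral_le0 (D : set R) (f : R -> R) :
  (forall x, D x -> f x <= 0) ->
  - (\int[mu]_(x in D) f x) = \int[mu]_(x in D) - f x.
Proof.
move=> f_le0; rewrite /Rintegral; under eq_integral do rewrite -[f _]opprK EFinN.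
by rewrite integral_ge0N ?fineN ?opprK // => x Dx; rewrite lee_fin oppr_ge0 f_le0.
Qed.

Lemma ge0_integral_itv_lty (a b M : R) (f : R -> R) :
  measurable_fun `[a, b] f -> {in `[a, b], forall x, 0 <= f x <= M} ->
  (\int[mu]_(x in `[a, b]) (f x)%:E < +oo)%E.
Proof.
move=> mf f_bnd; apply: (@le_lt_trans _ _ (\int[mu]_(x in `[a, b]) M%:E)%E).
  apply: ge0_le_integral => //.
  - by move=> x /f_bnd /andP[f_ge0 _]; rewrite lee_fin.
  - exact/measurable_EFinP.
  - by move=> x /f_bnd /andP[_ f_le]; rewrite lee_fin.
rewrite integral_cst //= lebesgue_measure_itv.
by case: ifP; rewrite ?mule0 // -EFinD -EFinM ltry.
Qed.

Lemma ge0_integral_itv_oppr (a b : R) (f : R -> R) :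
  measurable_fun `[a, b] f -> {in `[a, b], forall x, 0 <= f x} ->
  (\int[mu]_(x in `[a, b]) (f x)%:E =
   \int[mu]_(x in `[(- b)%R, (- a)%R]) (f (- x)%R)%:E)%E.
Proof.
move=> mf f_ge0.
have -> : [set` `[(- b)%R, (- a)%R]] = (-%R : R -> R) @^-1` `[a, b].
  by rewrite opp_preimage_itvbndbnd.
have mopp : measurable_fun setT (-%R : measurableTypeR R -> measurableTypeR R).
  exact: oppr_measurable.
rewrite -[RHS]/(\int[mu]_(x in _) ((EFin \o f) \o -%R) x)%E.
rewrite -(ge0_integral_pushforward mopp) //; last first.
- by move=> x /set_mem xab; rewrite lee_fin f_ge0.
- exact: measurableT_comp.
by apply: eq_measure_integral => A mA _; exact/esym/lebesgue_measureN.
Qed.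

End lebesgue_interval.

Section monotone.
Context {R : realType}.
Implicit Type f : R -> R.

Lemma nondecreasing_at_right_lee f (a : R) (l : \bar R) (x : R) :
  {in `]a, +oo[ &, nondecreasing_fun f} -> (f y)%:E @[y --> a^'+] --> l ->
  a < x -> (l <= (f x)%:E)%E.
Proof.
move=> f_nd f_lim ax; apply: (cvge_le _ f_lim); near=> y.
rewrite lee_fin f_nd ?in_itv /= ?andbT //.
by apply/ltW; near: y; exact: nbhs_right_lt.
Unshelve. all: end_near.
Qed.

Lemma nondecreasing_odd_extension f (c : R) :
  {in `]0, +oo[ &, nondecreasing_fun f} -> (forall x, 0 < x -> c <= f x) ->
  (forall x, x <= 0 -> f x = 2 * c - f (- x)) -> nondecreasing_fun f.
Proof.
move=> f_nd f_ge f_ext.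
have f0 : f 0 = c by have := f_ext 0 (lexx 0); rewrite oppr0; lra.
have f_ge0 x : 0 <= x -> c <= f x.
  by rewrite le_eqVlt => /predU1P[<-|/f_ge]; rewrite ?f0.
have f_nd0 x y : 0 <= x -> x <= y -> f x <= f y.
  rewrite le_eqVlt => /predU1P[<- y_ge0|x_gt0 xy]; first by rewrite f0 f_ge0.
  by rewrite f_nd ?in_itv /= ?andbT // (lt_le_trans x_gt0).
move=> x y xy; have [x_ge0|x_lt0] := leP 0 x; first exact: f_nd0.
rewrite (f_ext x (ltW x_lt0)); have [y_ge0|y_lt0] := leP 0 y.
  by have := f_ge0 y y_ge0; have := f_ge0 (- x) ltac:(lra); lra.
by rewrite (f_ext y (ltW y_lt0)) lerD2l lerN2 f_nd0 // ?lerN2 // oppr_ge0 ltW.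
Qed.

End monotone.

Lemma ratio_cvgy_le_scale_add {R : realType} (G eta : R -> R) (I : set R) :
  (forall u, eta (- u) = eta u) -> {in `[0, +oo[ &, nondecreasing_fun eta} ->
  (forall u, 0 < u -> 0 < eta u) -> G u / eta u @[u --> +oo] --> +oo ->
  (forall u, I u -> 0 <= G u) -> (forall u, I u -> u <= -1 -> G (- u) <= G u) ->
  forall eps, 0 < eps -> exists C, forall u, I u -> eta u <= eps * G u + C.
Proof.
move=> eta_even eta_nd eta_pos G_eta G_ge0 G_opp eps eps_gt0.
have [M [_ GM]] := proj1 (cvgryPge _) G_eta eps^-1.
pose M1 := Num.max M 1.
have [M_le M1_ge1] : M <= M1 /\ 1 <= M1 by rewrite !le_max !lexx orbT.
have eta_le_G u : M1 < u -> eta u <= eps * G u.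
  move=> M1u; have eta_gt0 : 0 < eta u by apply: eta_pos; lra.
  by rewrite -ler_pdivrMl // -ler_pdivlMr // GM //; lra.
have eta_M1_ge0 : 0 <= eta M1 by apply/ltW/eta_pos; lra.
exists (eta M1) => u Iu; have [M1u|uM1] := ltP M1 u.
  by apply: (le_trans (eta_le_G _ M1u)); rewrite lerDl.
have [M1u|uM1'] := leP (- M1) u.
  have eta_le : eta u <= eta M1.
    have [u_ge0|u_lt0] := leP 0 u.
      by apply: eta_nd; rewrite ?in_itv /= ?andbT //; lra.
    by rewrite -eta_even; apply: eta_nd; rewrite ?in_itv /= ?andbT //; lra.
  by rewrite -[eta u]add0r lerD // mulr_ge0 ?G_ge0 // ltW.
have M1_lt : M1 < - u by lra.
rewrite -eta_even; apply: (le_trans (eta_le_G _ M1_lt)).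
by rewrite -[eps * G (- u)]addr0 lerD // ler_pM2l // G_opp //; lra.
Qed.

Section Gamma.
Context {R : realType}.
Local Notation mu := (@lebesgue_measure R).
Variable p : R -> R.

Lemma Gamma_ge0_ge1 (u : R) : 1 <= u -> {in `[1, u], forall x, p 1 <= p x} ->
  0 <= Gamma p u.
Proof.
move=> u_ge1 p_ge; rewrite /Gamma u_ge1.
by apply: Rintegral_ge0 => x /p_ge; rewrite subr_ge0.
Qed.

Lemma Gamma_ge0_lt1 (u : R) : u < 1 -> measurable_fun `[u, 1] p ->
  {in `]u, 1], forall x, p x <= p 1} -> 0 <= Gamma p u.
Proof.
move=> u_lt1 mp p_le; rewrite /Gamma ifN -?ltNge //.
have -> : \int[mu]_(x in `[u, 1]) (p x - p 1) = \int[mu]_(x in `]u, 1]) (p x - p 1).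
  rewrite /Rintegral integral_itv_obnd_cbnd //.
  apply/measurable_EFinP/measurable_funB => //.
  by apply: measurable_funS mp => //; exact: subset_itv_oc_cc.
rewrite oppr_Rintegral_le0 => [|x /p_le]; last by rewrite subr_le0.
by apply: Rintegral_ge0 => x /p_le; rewrite oppr_ge0 subr_le0.
Qed.

Lemma Gamma_ge0_nondecreasing (u : R) : nondecreasing_fun p -> 0 <= Gamma p u.
Proof.
move=> p_nd; have [u_ge1|u_lt1] := leP 1 u.
  by apply: Gamma_ge0_ge1 => // x; rewrite in_itv /= => /andP[x_ge1 _]; exact: p_nd.
apply: Gamma_ge0_lt1 => //; first exact: nondecreasing_measurable.
by move=> x; rewrite in_itv /= => /andP[_ x_le1]; exact: p_nd.
Qed.

Lemma Gamma_le_Gamma_opp (c v : R) : nondecreasing_fun p ->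
  (forall x, x <= 0 -> p x = 2 * c - p (- x)) -> 1 <= v -> Gamma p v <= Gamma p (- v).
Proof.
move=> p_nd p_ext v_ge1.
have c_le : c <= p 1.
  by have := p_ext 0 (lexx 0); have := p_nd 0 1 ler01; rewrite oppr0; lra.
have mg D : measurable D -> measurable_fun D (fun x => p x - p 1).
  by move=> mD; apply: nondecreasing_measurable => // x y xy; rewrite lerD2r p_nd.
have mh D : measurable D -> measurable_fun D (fun x => p 1 - p x).
  by move=> mD; apply: nonincreasing_measurable => // x y xy; rewrite lerD2l lerN2 p_nd.
have h_ge0 x : x <= 1 -> 0 <= p 1 - p x by move=> x_le1; rewrite subr_ge0 p_nd.
have -> : Gamma p (- v) = \int[mu]_(x in `[- v, 1]) (p 1 - p x).
  rewrite /Gamma ifN -?ltNge; last lra.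
  rewrite oppr_Rintegral_le0 => [|x]; last first.
    by rewrite /= in_itv /= => /andP[_ /h_ge0]; lra.
  by apply: eq_Rintegral => x _; rewrite opprB.
have h_lty : (\int[mu]_(x in `[(- v)%R, 1%R]) (p 1 - p x)%:E < +oo)%E.
  apply: (@ge0_integral_itv_lty _ _ _ (p 1 - p (- v))) => [|x]; first exact: mh.
  rewrite in_itv /= => /andP[vx x_le1]; rewrite h_ge0 //= lerD2l lerN2 p_nd //.
have reflect_le : (\int[mu]_(x in `[1%R, v]) (p x - p 1)%:E <=
                   \int[mu]_(x in `[(- v)%R, 1%R]) (p 1 - p x)%:E)%E.
  rewrite ge0_integral_itv_oppr; [|exact: mg|]; last first.
    by move=> x; rewrite /= in_itv /= => /andP[x_ge1 _]; rewrite subr_ge0 p_nd.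
  apply: (@le_trans _ _ (\int[mu]_(x in `[(- v)%R, (-1)%R]) (p 1 - p x)%:E)%E).
    apply: ge0_le_integral => //.
    - move=> x; rewrite /= in_itv /= => /andP[_ x_le].
      by rewrite lee_fin subr_ge0 p_nd // lerNr.
    - apply/measurable_EFinP; apply: nonincreasing_measurable => // x y xy.
      by rewrite lerD2r p_nd // lerN2.
    - by apply/measurable_EFinP; exact: mh.
    - move=> x; rewrite /= in_itv /= => /andP[_ x_le]; rewrite lee_fin (p_ext x); lra.
  apply: ge0_subset_integral => //; first by apply/measurable_EFinP; exact: mh.
    by move=> x; rewrite /= in_itv /= => /andP[_ /h_ge0]; rewrite lee_fin.
  by apply: subset_itvl; rewrite bnd_simp; lra.
have g_ge0 : (0 <= \int[mu]_(x in `[1%R, v]) (p x - p 1)%:E)%E.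
  apply: integral_ge0 => x; rewrite /= in_itv /= => /andP[x_ge1 _].
  by rewrite lee_fin subr_ge0 p_nd.
rewrite /Gamma v_ge1 /Rintegral; apply: fine_le (reflect_le).
  by rewrite ge0_fin_numE // (le_lt_trans reflect_le).
by rewrite ge0_fin_numE // (le_trans g_ge0).
Qed.

End Gamma.

Section Gamma_on_Ip.
Context {R : realType}.
Variables (p : R -> R) (p0 : \bar R).
Hypothesis p_nd : {in `]0, +oo[ &, nondecreasing_fun p}.
Hypothesis p_lim0 : (p x)%:E @[x --> 0^'+] --> p0.
Hypothesis mp : measurable_fun `[0 : R, 1] p.
Hypothesis p_ext : forall c : R, p0 = c%:E -> forall u, u <= 0 -> p u = 2 * c - p (- u).

Let p0_le x : 0 < x -> (p0 <= (p x)%:E)%E.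
Proof. exact: nondecreasing_at_right_lee p_nd p_lim0. Qed.

Let p0_neq_pinfty : p0 != +oo%E.
Proof. by apply/eqP => p0E; have := @p0_le 1 ltr01; rewrite p0E leye_eq. Qed.

Let nondecreasing_of_p0_fin c : p0 = c%:E -> nondecreasing_fun p.
Proof.
move=> p0c; have c_le x : 0 < x -> c <= p x by move=> x_gt0; rewrite -lee_fin -p0c p0_le.
exact: (nondecreasing_odd_extension _ _ p_nd c_le (p_ext _ p0c)).
Qed.

Lemma Gamma_ge0_Ip u : Ip_closure p0 u -> 0 <= Gamma p u.
Proof.
rewrite /Ip_closure; case p0E: p0 p0_neq_pinfty => [c||] // _ u_ge0.
  by apply: Gamma_ge0_nondecreasing; exact: nondecreasing_of_p0_fin p0E.
have [u_ge1|u_lt1] := leP 1 u.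
  apply: Gamma_ge0_ge1 => // x; rewrite in_itv /= => /andP[x_ge1 _].
  by apply: p_nd; rewrite ?in_itv /= ?andbT //; lra.
apply: Gamma_ge0_lt1 => //.
  by apply: measurable_funS mp => //; apply: subset_itvr; rewrite bnd_simp.
move=> x; rewrite in_itv /= => /andP[ux x_le1].
by apply: p_nd; rewrite ?in_itv /= ?andbT //; lra.
Qed.

Lemma Gamma_opp_le_Ip u : Ip_closure p0 u -> u <= -1 -> Gamma p (- u) <= Gamma p u.
Proof.
rewrite /Ip_closure; case p0E: p0 p0_neq_pinfty => [c||] // _ Iu u_le; last lra.
rewrite -[X in _ <= Gamma p X]opprK.
apply: (Gamma_le_Gamma_opp _ _ _ (nondecreasing_of_p0_fin _ p0E) (p_ext _ p0E)); lra.
Qed.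

End Gamma_on_Ip.


Theorem lemma3p3 (R : realType) (eta p : R -> R)
  (eta_cont : {within `[0, +oo[, continuous eta})
  (eta0 : eta 0 = 0)
  (eta_pos : forall u, 0 < u -> 0 < eta u)
  (eta_mono : {in `[0, +oo[ &, {homo eta : x y / x <= y}})
  (eta_even : forall u, eta (- u) = eta u)
  (p_int : forall b : R, 0 < b ->
     lebesgue_measure.-integrable `[0, b] (fun x => (p x)%:E))
  (p_ac : abs_cont_pos p)
  (p_incr : {in `]0, +oo[ &, {homo p : x y / x < y}})
  (p_infty : p x @[x --> +oo] --> +oo)
  (p0 : \bar R)
  (p_lim0 : (p x)%:E @[x --> 0^'+] --> p0)
  (p_ext : forall c : R, p0 = c%:E -> forall u, u <= 0 -> p u = 2 * c - p (- u))
  (Gamma_growth : Gamma p u / eta u @[u --> +oo] --> +oo) :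
  forall eps : R, 0 < eps -> exists C : R,
    forall u : R, Ip_closure p0 u -> eta u <= eps * Gamma p u + C.
Proof.
have p_nd : {in `]0, +oo[ &, nondecreasing_fun p}.
  move=> x y x_pos y_pos; rewrite le_eqVlt => /predU1P[-> //|xy].
  exact/ltW/p_incr.
have mp : measurable_fun `[0 : R, 1] p.
  by have /measurable_int/measurable_EFinP := p_int 1 ltr01.
apply: ratio_cvgy_le_scale_add => //.
- by move=> u; apply: Gamma_ge0_Ip.
- by move=> u; apply: Gamma_opp_le_Ip.
Qed.
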